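(* Let $n_1,\dots,n_k\ge1$ with $n=\sum_in_i>k$, $n_{\min}=\min_in_i$, $n_{\max}=\max_in_i$. Let $B_k\in\mathbb{R}^{k\times k}$ be symmetric with nonnegative entries, $[B_k]_{ii}=\alpha_{ii}$ and $[B_k]_{ij}=\beta_{ij}$ for $i\ne j$. Let $$P=\begin{bmatrix}\mathbf{1}_{n_1}&0&\cdots&0\\0&\mathbf{1}_{n_2}&\cdots&0\\\vdots&&\ddots&\vdots\\0&0&\cdots&\mathbf{1}_{n_k}\end{bmatrix}\in\mathbb{R}^{n\times k},\quad A_{\mathrm{blk}}=PB_kP^T,\quad L_{\mathrm{blk}}=\mathrm{diag}\{A_{\mathrm{blk}}\mathbf{1}_n\}-A_{\mathrm{blk}}.$$ Suppose $$\Delta:=\min_i\alpha_{ii}-\frac{2n_{\max}}{n_{\min}}\max_i\sum_{j\ne i}\beta_{ij}>0.$$ Define $\tilde B_k=B_k\,\mathrm{diag}\{n_i\}_{i=1}^k$ and $\tilde L_k=\mathrm{diag}\{\tilde B_k\mathbf{1}_k\}-\tilde B_k$, and let $v_i(\tilde L_k)$ be a right eigenvector of $\tilde L_k$ associated with its $i$-th smallest eigenvalue $\lambda_i(\tilde L_k)$. Then: (1) for $i=1,\dots,k$, $\lambda_i(L_{\mathrm{blk}})=\lambda_i(\tilde L_k)$ and $Pv_i(\tilde L_k)$ is an eigenvector of $L_{\mathrm{blk}}$ associated with $\lambda_i(L_{\mathrm{blk}})$ (in particular $L_{\mathrm{blk}}$ is $k$-block-ideal); (2) $\lambda_{k+1}(L_{\mathrm{blk}})\ge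 b_{\min}n_{\min}$, where $b_{\min}=\min_i[B_k\mathbf{1}_k]_i$ is the minimum row sum of $B_k$; (3) $\lambda_{k+1}(L_{\mathrm{blk}})-\lambda_k(L_{\mathrm{blk}})\ge\Delta n_{\min}$.
   Context: $\lambda_i(\cdot)$ denotes the $i$-th smallest eigenvalue (the eigenvalues of $\tilde L_k$ are real). A Laplacian $L$ is $k$-block-ideal with respect to a partition $\{\mathcal{I}_1,\dots,\mathcal{I}_k\}$ of $[n]$ if there is an invertible $S\in\mathbb{R}^{k\times k}$ with $[v_1(L)\ \cdots\ v_k(L)]=[\mathbf{1}_{\mathcal{I}_1}\ \cdots\ \mathbf{1}_{\mathcal{I}_k}]S$, where $v_i(L)$ are orthonormal eigenvectors for the $k$ smallest eigenvalues and $\mathbf{1}_\mathcal{I}$ is the indicator vector of $\mathcal{I}$; here the partition is into consecutive blocks of sizes $n_1,\dots,n_k$. *)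

From HB Require Import structures.
From mathcomp Require Import all_boot all_order all_algebra.
From mathcomp Require Import reals.
Set Implicit Arguments. Unset Strict Implicit. Unset Printing Implicit Defensive.
Import Order.TTheory GRing.Theory Num.Theory.
Local Open Scope ring_scope.

Section Defs.
Variable R : realType.

(* minimum / maximum of a finite family f i, i : 'I_k (value 0 if k = 0,
   a case excluded by the hypotheses of the theorem) *)
Definition min_over (k : nat) (f : 'I_k -> R) : R :=
  let s := map f (enum 'I_k) in foldr Num.min (head 0 s) s.
Definition max_over (k : nat) (f : 'I_k -> R) : R :=
  let s := map f (enum 'I_k) in foldr Num.max (head 0 s) s.

Definition blockP (n k : nat) (nv : 'I_k -> nat) : 'M[R]_(n, k) :=
  \matrix_(r < n, c < k)
    (((\sum_(j < k | (j < c)%N) nv j <= r)%N &&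
      (r < \sum_(j < k | (j <= c)%N) nv j)%N)%:R).

Definition laplacian (m : nat) (A : 'M[R]_m) : 'M[R]_m :=
  diag_mx (\row_i \sum_j A i j) - A.

(* s is the list of all eigenvalues of A (with algebraic multiplicity),
   all real, sorted in nondecreasing order: s`_i = lambda_{i+1}(A) *)
Definition sorted_spectrum (m : nat) (A : 'M[R]_m) (s : seq R) : Prop :=
  [/\ size s = m, sorted <=%R s & char_poly A = \prod_(x <- s) ('X - x%:P)].

Definition eigenvector (m : nat) (A : 'M[R]_m) (l : R) (v : 'cV[R]_m) : Prop :=
  v != 0 /\ A *m v = l *: v.

Definition block_ideal (n k : nat) (L : 'M[R]_n) (Pind : 'M[R]_(n, k)) : Prop :=
  exists s : seq R, sorted_spectrum L s /\
  exists V : 'M[R]_(n, k),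
    [/\ V^T *m V = 1%:M,
        (forall j : 'I_k, L *m col j V = s`_j *: col j V) &
        exists2 S : 'M[R]_k, S \in unitmx & V = Pind *m S].
End Defs.

From HB Require Import structures.
From mathcomp Require Import all_boot all_order all_algebra.
From mathcomp Require Import reals.
From mathcomp Require Import ring lra zify.
Set Implicit Arguments. Unset Strict Implicit. Unset Printing Implicit Defensive.
Import Order.TTheory GRing.Theory Num.Theory.
Local Open Scope ring_scope.

(* With [P] the block indicator matrix and [N = P^T P = diag n_i], the block
   Laplacian intertwines with the reduced one: [L_blk P = P L~_k], so [P] maps
   eigenvectors of [L~_k] to eigenvectors of [L_blk].  For two rows [r], [r'] of
   the same block, [e_r - e_r'] lies in the kernel of [P^T] and is an eigenvector
   of [L_blk] for the degree [d_c] of that block; [n - k] such vectors complete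
   the columns of [P] to a basis, so
   [char L_blk = char L~_k * prod_t (X - d_(c_t))].
   Gershgorin's theorem applied to the columns of [L~_k] bounds its eigenvalues
   by [2 n_max max_i sum_(j <> i) beta_ij], while every [d_c] is at least
   [alpha_min n_min] and [b_min n_min]; [Delta > 0] separates the two groups, so
   the [k] smallest eigenvalues of [L_blk] are those of [L~_k] and
   [lambda_(k+1)] is a degree.  Finally [N^(1/2) L~_k N^(-1/2)] is symmetric; an
   orthonormal eigenbasis [U] of it gives the orthonormal block-constant
   eigenvectors [P N^(-1/2) U]. *)

Section CharPoly.
Variable R : fieldType.

Lemma char_poly_similar n (T A B : 'M[R]_n) :
  T \in unitmx -> T *m A = B *m T -> char_poly A = char_poly B.
Proof.
move=> Tu TA_BT; pose Tp := map_mx (@polyC R) T.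
have : Tp *m char_poly_mx A = char_poly_mx B *m Tp.
  by rewrite /char_poly_mx mulmxBr mulmxBl -!map_mxM TA_BT scalar_mxC.
move/(congr1 determinant); rewrite !det_mulmx [RHS]mulrC; apply: mulfI.
by rewrite det_map_mx polyC_eq0 -unitfE -unitmxE.
Qed.

Lemma char_poly_block_diag n1 n2 (A : 'M[R]_n1) (D : 'M[R]_n2) :
  char_poly (block_mx A 0 0 D) = char_poly A * char_poly D.
Proof.
rewrite /char_poly /char_poly_mx -(det_ublock _ 0); congr determinant.
rewrite map_block_mx !map_mx0 (scalar_mx_block n1 n2) opp_block_mx add_block_mx.
by rewrite !oppr0 !addr0.
Qed.

Lemma char_poly_diag_mx n (d : 'rV[R]_n) :
  char_poly (diag_mx d) = \prod_i ('X - (d 0 i)%:P).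
Proof.
rewrite char_poly_trig ?diag_mx_is_trig //.
by apply: eq_bigr => i _; rewrite mxE eqxx mulr1n.
Qed.

End CharPoly.

Section RealSymmetric.
Variable R : rcfType.

Lemma trmx_mul_cV n (w : 'cV[R]_n) : w^T *m w = (\sum_i w i 0 ^+ 2)%:M.
Proof.
rewrite [LHS]mx11_scalar !mxE; congr _%:M.
by apply: eq_bigr => i _; rewrite !mxE expr2.
Qed.

Lemma sum_sqr_cV_gt0 n (w : 'cV[R]_n) : w != 0 -> 0 < \sum_i w i 0 ^+ 2.
Proof.
move=> w_neq0; rewrite lt_def sumr_ge0 ?andbT => [|i _]; last exact: sqr_ge0.
apply: contra w_neq0; rewrite psumr_eq0 => [/allP w0|i _]; last exact: sqr_ge0.
apply/eqP/matrixP => i j; rewrite (ord1 j) mxE.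
by apply/eqP; rewrite -sqrf_eq0; apply: w0; rewrite mem_index_enum.
Qed.

Lemma reflection_to_delta m (u : 'cV[R]_m.+1) : u^T *m u = 1%:M ->
  exists Q : 'M[R]_m.+1, [/\ Q^T = Q, Q *m Q = 1%:M & Q *m delta_mx 0 0 = u].
Proof.
move=> u_unit; set e : 'cV[R]_m.+1 := delta_mx 0 0.
have [->|u_neq_e] := eqVneq u e; first by exists 1%:M; rewrite trmx1 mulmx1 mul1mx.
set w := u - e; set c := \sum_i w i 0 ^+ 2.
have c_gt0 : 0 < c by apply: sum_sqr_cV_gt0; rewrite subr_eq0.
have ww : w^T *m w = c%:M by apply: trmx_mul_cV.
have e_dot x : x^T *m e = (x 0 0)%:M.
  rewrite [LHS]mx11_scalar !mxE (bigD1 0) //= big1 => [|i /negbTE i_neq0].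
    by rewrite !mxE eqxx mulr1 addr0.
  by rewrite !mxE i_neq0 mulr0.
have eu : e^T *m u = (u 0 0)%:M.
  by rewrite -[LHS]trmxK trmx_mul trmxK e_dot tr_scalar_mx.
have wT : w^T = u^T - e^T by rewrite /w linearB.
have we : w^T *m e = (u 0 0 - 1)%:M.
  by rewrite wT mulmxBl !e_dot mxE eqxx -raddfB.
have c_def : c = 2 * (1 - u 0 0).
  have : w^T *m w = (2 * (1 - u 0 0))%:M.
    rewrite wT mulmxBl /w !mulmxBr u_unit !e_dot eu mxE eqxx.
    by rewrite -!raddfB /=; congr _%:M; ring.
  by rewrite ww => /matrixP/(_ 0 0); rewrite !mxE eqxx !mulr1n.
exists (1%:M - (2 / c) *: (w *m w^T)); split.
- by rewrite linearB /= linearZ /= trmx1 trmx_mul trmxK.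
- rewrite mulmxBl !mulmxBr mul1mx mulmx1 -!scalemxAl -!scalemxAr mul1mx.
  rewrite !mulmxA -[w *m w^T *m w]mulmxA ww mul_mx_scalar -scalemxAl !scalerA.
  have -> : 2 / c * (2 / c * c) = 2 * (2 / c) by field; rewrite gt_eqF.
  by apply/matrixP => i j; rewrite !mxE; ring.
- rewrite mulmxBl mul1mx -scalemxAl -mulmxA we mul_mx_scalar scalerA.
  have -> : 2 / c * (u 0 0 - 1) = -1.
    rewrite c_def; have := c_gt0; rewrite c_def => /lt0r_neq0 c_neq0; field.
    by apply: contraNneq c_neq0 => ->; rewrite mulr0.
  by rewrite scaleN1r opprK /w addrC subrK.
Qed.

Lemma diag_mx_cons_block m (l : R) (s : seq R) :
  diag_mx (\row_(i < 1 + m) (l :: s)`_i) =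
  block_mx l%:M 0 0 (diag_mx (\row_(i < m) s`_i)).
Proof.
apply/matrixP => i j; rewrite -[i](@splitK 1 m) -[j](@splitK 1 m).
case: (split i) => [i'|i']; case: (split j) => [j'|j'];
  rewrite ?block_mxEul ?block_mxEur ?block_mxEdl ?block_mxEdr !mxE /=.
- by rewrite !ord1 eqxx.
- by rewrite -(inj_eq val_inj) /= ord1.
- by rewrite -(inj_eq val_inj) /= ord1.
- by rewrite -(inj_eq val_inj) /= eqn_add2l add0n.
Qed.

Lemma symmetric_unit_eigenvector m (A : 'M[R]_m) l : A^T = A -> eigenvalue A l ->
  exists u : 'cV[R]_m, u^T *m u = 1%:M /\ A *m u = l *: u.
Proof.
move=> A_sym /eigenvalueP[v vA v_neq0].
have v_norm_gt0 : 0 < \sum_i v^T i 0 ^+ 2 by rewrite sum_sqr_cV_gt0 ?trmx_eq0.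
exists ((Num.sqrt (\sum_i v^T i 0 ^+ 2))^-1 *: v^T); split.
  rewrite trmx_mul_cV; congr _%:M; under eq_bigr do rewrite mxE exprMn.
  by rewrite -mulr_sumr exprVn sqr_sqrtr ?mulVf ?gt_eqF ?ltW.
by rewrite -scalemxAr -A_sym -trmx_mul vA linearZ /= scalerA mulrC -scalerA.
Qed.

Lemma symmetric_deflation m (C : 'M[R]_(1 + m)) l : C^T = C ->
  C *m delta_mx 0 0 = l *: (delta_mx 0 0 : 'cV_(1 + m)) ->
  C = block_mx l%:M 0 0 (drsubmx C).
Proof.
move=> C_sym C_e0; have C_col0 i : C i 0 = l * (i == 0)%:R.
  by move/matrixP/(_ i 0): C_e0; rewrite -colE !mxE eqxx andbT.
have lshift0 i : @lshift 1 m i = 0 by apply: val_inj; rewrite /= ord1.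
rewrite -[C in LHS]submxK; congr block_mx; apply/matrixP => i j; rewrite !mxE.
- by rewrite !ord1 lshift0 C_col0 mulr1 mulr1n.
- by rewrite -[C]C_sym mxE lshift0 C_col0 mulr0.
- by rewrite lshift0 C_col0 mulr0.
Qed.

(* Induction on the size: a Householder reflection [Q] sends [delta_mx 0 0] to
   a unit eigenvector for [s`_0], so [Q A Q] splits off that eigenvalue. *)
Lemma symmetric_diagonalization m (A : 'M[R]_m) (s : seq R) : A^T = A ->
  char_poly A = \prod_(x <- s) ('X - x%:P) ->
  exists U : 'M[R]_m, U^T *m U = 1%:M /\ A *m U = U *m diag_mx (\row_i s`_i).
Proof.
elim: m A s => [|m IH] A s A_sym A_cp.
  by exists 1%:M; split; rewrite [LHS]flatmx0 [RHS]flatmx0.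
have : size s = m.+1.
  have := congr1 (fun p : {poly R} => size p) A_cp.
  by rewrite size_char_poly size_prod_XsubC => -[].
case: s A_cp => [//|l s] A_cp [size_s].
have A_l : eigenvalue A l by rewrite eigenvalue_root_char A_cp root_prod_XsubC mem_head.
have [u [u_unit Au]] := symmetric_unit_eigenvector A_sym A_l.
have [Q [Q_sym QQ Qe]] := reflection_to_delta u_unit.
have Q_unit : Q \in unitmx by case: (mulmx1_unit QQ).
set C : 'M[R]_(1 + m) := Q *m A *m Q.
have QC : Q *m C = A *m Q by rewrite /C !mulmxA QQ mul1mx.
have C_sym : C^T = C by rewrite /C !trmx_mul Q_sym A_sym mulmxA.
have C_block : C = block_mx l%:M 0 0 (drsubmx C).
  apply: symmetric_deflation C_sym _.
  by rewrite /C -!mulmxA Qe Au -scalemxAr -Qe mulmxA QQ mul1mx.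
set A' := drsubmx C.
have A'_cp : char_poly A' = \prod_(x <- s) ('X - x%:P).
  move: (char_poly_similar Q_unit QC).
  rewrite A_cp big_cons C_block (char_poly_block_diag (l%:M : 'M_1)).
  rewrite char_poly_trig ?scalar_mx_is_trig // big_ord1 mxE eqxx mulr1n.
  by apply: mulfI; rewrite polyXsubC_eq0.
have A'_sym : A'^T = A' by rewrite /A' trmx_drsub C_sym.
have [U' [U'U' A'U']] := IH A' s A'_sym A'_cp.
set W : 'M[R]_(1 + m) := block_mx 1%:M 0 0 U'.
have WW : W^T *m W = 1%:M.
  rewrite tr_block_mx mulmx_block !trmx0 trmx1 !mulmx0 !mul0mx ?mulmx1 ?mul1mx.
  by rewrite !addr0 !add0r U'U' -scalar_mx_block.
have CW : C *m W = W *m diag_mx (\row_(i < 1 + m) (l :: s)`_i).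
  rewrite diag_mx_cons_block C_block -/A' !mulmx_block !mulmx0 !mul0mx ?mulmx1.
  by rewrite ?mul1mx !addr0 !add0r A'U'.
exists (Q *m W); split.
  by rewrite trmx_mul Q_sym mulmxA -[_ *m Q *m Q]mulmxA QQ mulmx1.
by rewrite mulmxA -QC -mulmxA CW mulmxA.
Qed.

End RealSymmetric.

Definition partition_mx (R : pzRingType) n k (f : 'I_n -> 'I_k) : 'M[R]_(n, k) :=
  \matrix_(r, c) (f r == c)%:R.

Section PartitionMx.
Variables (R : comPzRingType) (n k : nat) (f : 'I_n -> 'I_k).
Local Notation P := (partition_mx R f).

Lemma mul_partition_mx p (M : 'M[R]_(k, p)) r j : (P *m M) r j = M (f r) j.
Proof.
rewrite mxE (bigD1 (f r)) //= big1 => [|c /negbTE fr_c].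
  by rewrite mxE eqxx mul1r addr0.
by rewrite mxE eq_sym fr_c mul0r.
Qed.

Lemma mul_tr_partition_mx p (M : 'M[R]_(p, k)) i s : (M *m P^T) i s = M i (f s).
Proof. by rewrite -[M *m _]trmxK trmx_mul trmxK mxE mul_partition_mx mxE. Qed.

Lemma partition_mx_gram :
  P^T *m P = diag_mx (\row_c #|[set r | f r == c]|%:R).
Proof.
apply/matrixP => c c'; rewrite !mxE.
have [<-|c_neq] := eqVneq c c'; last first.
  rewrite mulr0n big1 // => r _; rewrite !mxE.
  by case: (eqVneq (f r) c) => [->|]; rewrite ?(negbTE c_neq) ?mulr0 ?mul0r.
rewrite mulr1n -sum1dep_card natr_sum [RHS]big_mkcond /=.
by apply: eq_bigr => r _; rewrite !mxE; case: eqP; rewrite ?mulr1 ?mul0r.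
Qed.

Lemma diag_partition_mx (d : 'I_k -> R) :
  diag_mx (\row_r d (f r)) *m P = P *m diag_mx (\row_c d c).
Proof.
rewrite mul_diag_mx mul_mx_diag; apply/matrixP => r c; rewrite !mxE.
by have [->|] := eqVneq (f r) c; rewrite ?mulr1 ?mul1r ?mulr0 ?mul0r.
Qed.

End PartitionMx.

Section LaplacianPartitionMx.
Variables (R : realType) (n k : nat) (f : 'I_n -> 'I_k) (M : 'M[R]_k).
Local Notation P := (partition_mx R f).
Let d c := \sum_j (M *m (P^T *m P)) c j.

Lemma laplacian_partition_mx :
  laplacian (P *m M *m P^T) = diag_mx (\row_r d (f r)) - P *m M *m P^T.
Proof.
congr (diag_mx _ - _); apply/rowP => r; rewrite !mxE /d partition_mx_gram.
under eq_bigr do rewrite mul_tr_partition_mx mul_partition_mx.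
under [RHS]eq_bigr do rewrite mul_mx_diag !mxE.
rewrite (partition_big f xpredT) //=; apply: eq_bigr => c _.
rewrite -sum1dep_card natr_sum mulr_sumr.
by apply: eq_bigr => s /eqP ->; rewrite mulr1.
Qed.

Lemma laplacian_partition_mx_mul :
  laplacian (P *m M *m P^T) *m P = P *m laplacian (M *m (P^T *m P)).
Proof.
rewrite laplacian_partition_mx mulmxBl diag_partition_mx /laplacian mulmxBr.
by congr (_ - _); rewrite !mulmxA.
Qed.

End LaplacianPartitionMx.

Lemma exists_nonsection_enum k m (f : 'I_(k + m) -> 'I_k) (g : 'I_k -> 'I_(k + m)) :
  cancel g f -> exists h : 'I_m -> 'I_(k + m), injective h /\ forall t, h t != g (f (h t)).
Proof.
move=> gK; pose S := [set r | r != g (f r)].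
have card_S : #|S| = m.
  have SC : ~: S = g @: [set: 'I_k].
    apply/setP => r; rewrite !inE negbK; apply/eqP/imsetP => [->|[c _ ->]].
      by exists (f r).
    by rewrite gK.
  have := cardsC S; rewrite SC card_imset ?cardsT ?card_ord; last exact: can_inj gK.
  by lia.
exists (fun t => enum_val (cast_ord (esym card_S) t)); split.
  by move=> t t' /enum_val_inj /cast_ord_inj.
by move=> t; have := enum_valP (cast_ord (esym card_S) t); rewrite inE.
Qed.

Section ExtraEigenvalues.
Variables (R : realType) (k m : nat) (f : 'I_(k + m) -> 'I_k) (M : 'M[R]_k).
Variables (g : 'I_k -> 'I_(k + m)) (h : 'I_m -> 'I_(k + m)).
Hypotheses (gK : cancel g f) (h_inj : injective h).
Hypothesis h_nonsection : forall t, h t != g (f (h t)).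
Local Notation P := (partition_mx R f).
Local Notation Ph := (partition_mx R h).
Local Notation Pgfh := (partition_mx R (g \o f \o h)).
Let d c := \sum_j (M *m (P^T *m P)) c j.

(* [g] picks a representative row in each block and [h] enumerates the other
   rows; the columns [e_(h t) - e_(g (f (h t)))] of [W] are differences of two
   rows of the same block, hence eigenvectors of the lifted Laplacian. *)
Let W := Ph^T - Pgfh^T.

Lemma tr_partition_mx_mul_W : P^T *m W = 0.
Proof.
rewrite mulmxBr; apply/eqP; rewrite subr_eq0; apply/eqP/matrixP => c t.
by rewrite !mul_tr_partition_mx !mxE /= gK.
Qed.

Lemma laplacian_partition_mx_mul_W :
  laplacian (P *m M *m P^T) *m W = W *m diag_mx (\row_t d (f (h t))).
Proof.
rewrite laplacian_partition_mx mulmxBl -!mulmxA tr_partition_mx_mul_W !mulmx0 subr0.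
have diag_tr (p : 'I_m -> 'I_(k + m)) : diag_mx (\row_i d (f i)) *m (partition_mx R p)^T
    = (partition_mx R p)^T *m diag_mx (\row_t d (f (p t))).
  rewrite -[LHS]trmxK trmx_mul tr_diag_mx trmxK.
  by rewrite -(diag_partition_mx p (fun i => d (f i))) trmx_mul tr_diag_mx.
rewrite mulmxBr mulmxBl !diag_tr /=.
by congr (_ - _ *m diag_mx _); apply/rowP => t; rewrite !mxE gK.
Qed.

Lemma row_mx_partition_mx_W_unit : row_mx P W \in unitmx.
Proof.
have fiber_gt0 c : 0 < #|[set r | f r == c]|%:R :> R.
  by rewrite ltr0n card_gt0; apply/set0Pn; exists (g c); rewrite inE gK.
pose Y := diag_mx (\row_c #|[set r | f r == c]|%:R^-1) *m P^T.
have YP : Y *m P = 1%:M.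
  rewrite -mulmxA partition_mx_gram mulmx_diag; apply/matrixP => c c'; rewrite !mxE.
  by rewrite mulVf // gt_eqF ?fiber_gt0.
have YW : Y *m W = 0 by rewrite -mulmxA tr_partition_mx_mul_W mulmx0.
have PhW : Ph *m W = 1%:M.
  have PhPh : Ph *m Ph^T = 1%:M.
    by apply/matrixP => t t'; rewrite mul_tr_partition_mx !mxE (inj_eq h_inj).
  have PhPgfh : Ph *m Pgfh^T = 0.
    apply/matrixP => t t'; rewrite mul_tr_partition_mx !mxE /=; case: eqVneq => // hg.
    by have := h_nonsection t; rewrite {2}hg gK -hg eqxx.
  by rewrite mulmxBr PhPh PhPgfh subr0.
have inv : col_mx Y (Ph *m (1%:M - P *m Y)) *m row_mx P W = 1%:M.
  rewrite mul_col_row YP YW -!mulmxA !mulmxBl !mul1mx -!(mulmxA P) YP YW.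
  by rewrite mulmx1 mulmx0 subrr subr0 mulmx0 PhW -scalar_mx_block.
by case: (mulmx1_unit inv).
Qed.

Lemma char_poly_laplacian_partition_mxE :
  char_poly (laplacian (P *m M *m P^T)) =
  char_poly (laplacian (M *m (P^T *m P))) * \prod_t ('X - (d (f (h t)))%:P).
Proof.
have : row_mx P W *m block_mx (laplacian (M *m (P^T *m P))) 0 0 (diag_mx (\row_t d (f (h t))))
    = laplacian (P *m M *m P^T) *m row_mx P W.
  by rewrite mul_row_block mul_mx_row !mulmx0 addr0 add0r laplacian_partition_mx_mul
    laplacian_partition_mx_mul_W.
move/(char_poly_similar row_mx_partition_mx_W_unit) <-.
by rewrite char_poly_block_diag char_poly_diag_mx; under eq_bigr do rewrite mxE.
Qed.

End ExtraEigenvalues.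

Lemma char_poly_laplacian_partition_mx (R : realType) k m (f : 'I_(k + m) -> 'I_k)
    (M : 'M[R]_k) :
  (forall c, exists r, f r = c) ->
  let P := partition_mx R f in
  exists e : 'I_m -> 'I_k,
  char_poly (laplacian (P *m M *m P^T)) = char_poly (laplacian (M *m (P^T *m P))) *
    \prod_t ('X - (\sum_j (M *m (P^T *m P)) (e t) j)%:P).
Proof.
move=> /fin_all_exists[g gK] P; have [h [h_inj h_ns]] := exists_nonsection_enum gK.
by exists (f \o h); apply: char_poly_laplacian_partition_mxE.
Qed.

Lemma card_ord_interval n a b : (b <= n)%N ->
  #|[set r : 'I_n | (a <= r < b)%N]| = (b - a)%N.
Proof.
move=> b_le_n; rewrite -sum1dep_card -(muln1 (b - a)%N) -sum_nat_const_nat.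
rewrite (big_nat_widen _ _ _ _ _ b_le_n) big_geq_mkord.
by apply: eq_bigl => r; rewrite andbC.
Qed.

Lemma disjoint_family_cover (T : finType) k (A : 'I_k -> {set T}) :
  (forall x c c', x \in A c -> x \in A c' -> c = c') ->
  (\sum_c #|A c|)%N = #|T| -> forall x, exists c, x \in A c.
Proof.
move=> A_disj sum_A x0; apply/existsP; apply: contraT => /existsPn x0_out.
pose F x := (\sum_c (x \in A c))%N.
have F_le1 x : (F x <= 1)%N.
  have [c xc|x_out] := pickP (fun c => x \in A c); last first.
    by rewrite /F big1 // => c _; rewrite x_out.
  rewrite /F (bigD1 c) //= xc big1 // => c' c'_neq; apply/eqP; rewrite eqb0.
  by apply: contra c'_neq => xc'; rewrite (A_disj _ _ _ xc xc').
have : (\sum_x F x = #|T|)%N.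
  rewrite -sum_A exchange_big /=; apply: eq_bigr => c _.
  by rewrite -sum1_card [RHS]big_mkcond.
rewrite (bigD1 x0) //= {1}/F big1 => [|c _]; last by rewrite (negbTE (x0_out c)).
have : (\sum_(x | x != x0) F x <= \sum_(x | x != x0) 1)%N.
  by apply: leq_sum => x _; apply: F_le1.
rewrite sum1_card cardC1 add0n => le_sum eq_sum.
have : (0 < #|T|)%N by apply/card_gt0P; exists x0.
by rewrite -ltn_predL ltnNge -{1}eq_sum le_sum.
Qed.

Lemma blockP_partition (R : realType) k n (nv : 'I_k -> nat) : n = (\sum_i nv i)%N ->
  exists f : 'I_n -> 'I_k,
    blockP R n nv = partition_mx R f /\ forall c, #|[set r | f r == c]| = nv c.
Proof.
move=> n_sum; pose o (c : 'I_k) := (\sum_(j < k | (j < c)%N) nv j)%N.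
pose I c := [set r : 'I_n | (o c <= r < o c + nv c)%N].
have end_o (c : 'I_k) : (\sum_(j < k | (j <= c)%N) nv j)%N = (o c + nv c)%N.
  rewrite (bigD1 c) //= addnC; congr (_ + _)%N.
  by apply: eq_bigl => j; rewrite ltn_neqAle andbC.
have end_le_n (c : 'I_k) : (o c + nv c <= n)%N.
  by rewrite -end_o n_sum [X in (_ <= X)%N](bigID (fun j : 'I_k => (j <= c)%N)) leq_addr.
have card_I c : #|I c| = nv c by rewrite card_ord_interval // addKn.
have I_disj r (c c' : 'I_k) : r \in I c -> r \in I c' -> c = c'.
  wlog lt_cc' : c c' / (c < c')%N => [hwlog rc rc'|].
    case: (ltngtP c c') => [lt|gt|/val_inj //]; first exact: hwlog.
    exact/esym/hwlog.
  have : (o c + nv c <= o c')%N.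
    rewrite -end_o /o big_mkcond [X in (_ <= X)%N]big_mkcond /=.
    by apply: leq_sum => j _; case: ifP => // /leq_ltn_trans/(_ lt_cc') ->.
  by rewrite !inE; lia.
have sum_I : (\sum_c #|I c|)%N = #|'I_n|.
  by rewrite card_ord [RHS]n_sum; apply: eq_bigr => c _; apply: card_I.
have [f f_I] := fin_all_exists (disjoint_family_cover I_disj sum_I).
have I_f r c : (r \in I c) = (f r == c).
  by apply/idP/eqP => [rc|<-]; [apply: I_disj rc | apply: f_I].
exists f; split; first by apply/matrixP => r c; rewrite !mxE end_o -I_f inE.
by move=> c; rewrite -card_I; apply: eq_card => r; rewrite !inE -I_f inE.
Qed.

Section FoldMinMax.
Variable R : realDomainType.

Lemma foldr_min_le (s : seq R) a x : x \in s -> foldr Num.min a s <= x.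
Proof.
elim: s => [//|y s IH]; rewrite inE /= ge_min => /orP[/eqP ->|/IH ->].
  by rewrite lexx.
by rewrite orbT.
Qed.

Lemma foldr_max_ge (s : seq R) a x : x \in s -> x <= foldr Num.max a s.
Proof.
elim: s => [//|y s IH]; rewrite inE /= le_max => /orP[/eqP ->|/IH ->].
  by rewrite lexx.
by rewrite orbT.
Qed.

Lemma foldr_min_ge (s : seq R) a c :
  c <= a -> {in s, forall x, c <= x} -> c <= foldr Num.min a s.
Proof.
move=> c_le_a; elim: s => [//|y s IH] s_ge /=.
by rewrite le_min s_ge ?mem_head // IH // => x xs; rewrite s_ge // inE xs orbT.
Qed.

End FoldMinMax.

Section MinMaxOver.
Variable R : realType.

Lemma min_over_le k (f : 'I_k -> R) i : min_over f <= f i.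
Proof. by apply: foldr_min_le; rewrite map_f ?mem_enum. Qed.

Lemma max_over_ge k (f : 'I_k -> R) i : f i <= max_over f.
Proof. by apply: foldr_max_ge; rewrite map_f ?mem_enum. Qed.

Lemma min_over_ge k (f : 'I_k -> R) c :
  (0 < k)%N -> (forall i, c <= f i) -> c <= min_over f.
Proof.
case: k f => // k f _ f_ge; apply: foldr_min_ge => [|_ /mapP[i _ ->] //].
by rewrite enum_ordSl /=.
Qed.

End MinMaxOver.

Lemma eigenvalue_gershgorin_col (R : realFieldType) n (A : 'M[R]_n) x :
  eigenvalue A x -> exists j, `|x - A j j| <= \sum_(i | i != j) `|A i j|.
Proof.
case/eigenvalueP => v vA v_neq0.
have [i0 vi0] : exists i0, v 0 i0 != 0.
  apply/existsP; apply: contraR v_neq0 => /existsPn v0.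
  by apply/eqP/matrixP => i j; rewrite ord1 mxE; apply/eqP/negPn/v0.
have [j _ vj_max] := @arg_maxP _ R _ i0 xpredT (fun j => `|v 0 j|) isT.
exists j; have vj_gt0 : 0 < `|v 0 j| by apply: lt_le_trans (vj_max i0 isT); rewrite normr_gt0.
have vAj : (x - A j j) * v 0 j = \sum_(i | i != j) v 0 i * A i j.
  move/matrixP/(_ 0 j): vA; rewrite !mxE (bigD1 j) //= => vAj.
  by rewrite mulrBl -vAj [A j j * _]mulrC addrAC subrr add0r.
rewrite -(ler_pM2r vj_gt0) -normrM vAj mulr_suml.
apply: le_trans (ler_norm_sum _ _ _) _; apply: ler_sum => i _.
by rewrite normrM mulrC; apply: ler_wpM2l; [exact: normr_ge0 | exact: vj_max].
Qed.

Lemma laplacian_weighted_eigenvalue_le (R : realType) k (B : 'M[R]_k) (w : 'I_k -> R) x :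
  B^T = B -> (forall i j, 0 <= B i j) -> (forall i, 0 <= w i) ->
  eigenvalue (laplacian (B *m diag_mx (\row_i w i))) x ->
  x <= 2 * max_over w * max_over (fun i => \sum_(j < k | j != i) B i j).
Proof.
move=> B_sym B_ge0 w_ge0 /eigenvalue_gershgorin_col[j].
set L := laplacian _; set wmax := max_over w; set bmax := max_over _.
have Lij i j' : L i j' = (\sum_l B i l * w l) *+ (i == j') - B i j' * w j'.
  by rewrite /L /laplacian mul_mx_diag !mxE; under eq_bigr do rewrite !mxE.
have bj_ge0 : 0 <= \sum_(l | l != j) B j l by apply: sumr_ge0.
have bj_le : \sum_(l | l != j) B j l <= bmax by apply: (max_over_ge (fun i => _)).
have wj_le : w j <= wmax by apply: max_over_ge.
have Ljj_le : L j j <= wmax * bmax.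
  rewrite Lij eqxx mulr1n (bigD1 j) //= addrC addrK.
  apply: le_trans (ler_wpM2l (le_trans (w_ge0 j) wj_le) bj_le).
  rewrite mulr_sumr; apply: ler_sum => l _; rewrite mulrC.
  by apply: ler_wpM2r; [exact: B_ge0 | exact: max_over_ge].
have col_le : \sum_(i | i != j) `|L i j| <= wmax * bmax.
  apply: le_trans (ler_pM (w_ge0 j) bj_ge0 wj_le bj_le).
  rewrite mulr_sumr; apply: ler_sum => i ij.
  rewrite Lij (negbTE ij) mulr0n sub0r normrN ger0_norm ?mulr_ge0 //.
  by rewrite mulrC -{1}B_sym mxE.
move=> gersh; have := ler_normlW (le_trans gersh col_le); lra.
Qed.

Lemma sorted_perm_cat d (T : orderType d) (s t u : seq T) :
  sorted <=%O s -> sorted <=%O t -> perm_eq s (t ++ u) -> allrel <=%O t u ->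
  s = t ++ sort <=%O u.
Proof.
move=> s_sorted t_sorted s_tu t_le_u; apply: (sorted_eq le_trans le_anti) => //.
  rewrite !(sorted_pairwise le_trans) in t_sorted *.
  rewrite pairwise_cat t_sorted -(sorted_pairwise le_trans) (sort_sorted le_total).
  by rewrite (eq_allrel_memr _ _ (mem_sort _ _)) t_le_u.
by rewrite (permPl s_tu) perm_cat2l perm_sym perm_sort.
Qed.

Section BlockModel.
Variables (R : realType) (k m : nat) (nv : 'I_k -> nat) (f : 'I_(k + m) -> 'I_k).
Variable B : 'M[R]_k.
Hypotheses (nv_gt0 : forall c, (1 <= nv c)%N)
  (card_f : forall c, #|[set r | f r == c]| = nv c).
Hypotheses (B_sym : B^T = B) (B_ge0 : forall i j, 0 <= B i j).

Local Notation P := (partition_mx R f).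
Local Notation N := (diag_mx (\row_i (nv i)%:R) : 'M[R]_k).
Local Notation Lblk := (laplacian (P *m B *m P^T)).
Local Notation Lt := (laplacian (B *m N)).
Local Notation nmin := (min_over (fun i => (nv i)%:R : R)).
Local Notation nmax := (max_over (fun i => (nv i)%:R : R)).
Local Notation amin := (min_over (fun i => B i i)).
Local Notation bmax := (max_over (fun i => \sum_(j < k | j != i) B i j)).
Local Notation bmin := (min_over (fun i => \sum_j B i j)).
Let deg c := \sum_j (B *m N) c j.

Lemma partition_mx_gram_nv : P^T *m P = N.
Proof.
by rewrite partition_mx_gram; congr diag_mx; apply/rowP => c; rewrite !mxE card_f.
Qed.

Lemma partition_mx_surj c : exists r, f r = c.
Proof.
have /card_gt0P[r] : (0 < #|[set r | f r == c]|)%N by rewrite card_f.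
by rewrite inE => /eqP; exists r.
Qed.

Lemma laplacian_block_mul : Lblk *m P = P *m Lt.
Proof. by rewrite laplacian_partition_mx_mul partition_mx_gram_nv. Qed.

Lemma eigenvector_block_lift l v : eigenvector Lt l v -> eigenvector Lblk l (P *m v).
Proof.
move=> [v_neq0 Ltv]; split; last by rewrite mulmxA laplacian_block_mul -mulmxA Ltv scalemxAr.
apply: contra v_neq0 => /eqP Pv0; apply/eqP/matrixP => c j.
by have [r <-] := partition_mx_surj c; rewrite -mul_partition_mx Pv0 !mxE.
Qed.

Lemma degE c : deg c = \sum_j B c j * (nv j)%:R.
Proof. by apply: eq_bigr => j _; rewrite mul_mx_diag !mxE. Qed.

Lemma nmin_ge1 : (0 < k)%N -> 1 <= nmin.
Proof. by move=> k_gt0; apply: min_over_ge => // i; rewrite ler1n. Qed.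

Lemma deg_ge_diag c : amin * nmin <= deg c.
Proof.
have k_gt0 : (0 < k)%N by apply: leq_ltn_trans (ltn_ord c).
rewrite degE (bigD1 c) //= -[X in X <= _]addr0.
apply: lerD; last by apply: sumr_ge0 => j _; rewrite mulr_ge0.
apply: ler_pM; rewrite ?min_over_le //; last by apply: le_trans (nmin_ge1 k_gt0).
exact: min_over_ge.
Qed.

Lemma deg_ge_rowsum c : bmin * nmin <= deg c.
Proof.
have k_gt0 : (0 < k)%N by apply: leq_ltn_trans (ltn_ord c).
have nmin_ge0 : 0 <= nmin by apply: le_trans (nmin_ge1 k_gt0).
apply: le_trans (ler_wpM2r nmin_ge0 (min_over_le (fun i => \sum_j B i j) c)) _.
rewrite degE mulr_suml; apply: ler_sum => j _.
by apply: ler_wpM2l => //; apply: min_over_le.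
Qed.

Lemma eigenvalue_laplacian_le x : root (char_poly Lt) x -> x <= 2 * nmax * bmax.
Proof.
by rewrite -eigenvalue_root_char; apply: laplacian_weighted_eigenvalue_le => // i.
Qed.

Lemma spectrum_block_split sL sT : 2 * nmax * bmax < amin * nmin ->
  sorted_spectrum Lblk sL -> sorted_spectrum Lt sT ->
  (forall i, (i < k)%N -> sL`_i = sT`_i) /\
  (forall i, (k <= i < k + m)%N -> exists c, sL`_i = deg c).
Proof.
move=> gap [_ sL_sorted sL_cp] [size_sT sT_sorted sT_cp].
have [e cpE] := char_poly_laplacian_partition_mx B partition_mx_surj.
rewrite partition_mx_gram_nv in cpE.
pose E := [seq deg (e t) | t <- enum 'I_m].
have sL_perm : perm_eq sL (sT ++ E).
  by apply: prod_XsubC_eq; rewrite big_cat /= -sL_cp -sT_cp cpE big_map enumT.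
have sT_le_E : allrel <=%R sT E.
  apply/allrelP => x _ xT /mapP[t _ ->].
  have := @eigenvalue_laplacian_le x; rewrite sT_cp root_prod_XsubC => /(_ xT).
  by have := deg_ge_diag (e t); lra.
rewrite (sorted_perm_cat sL_sorted sT_sorted sL_perm sT_le_E).
split=> i; rewrite nth_cat size_sT; first by move=> ->.
case/andP => k_le_i i_lt; rewrite ltnNge k_le_i /=.
have : (sort <=%R E)`_(i - k) \in E.
  by rewrite -(mem_sort <=%R) mem_nth // size_sort size_map size_enum_ord; lia.
by case/mapP => t _ ->; exists (e t).
Qed.

Let Delta := amin - 2 * nmax / nmin * bmax.

Lemma Delta_mul_nmin : (0 < k)%N -> Delta * nmin = amin * nmin - 2 * nmax * bmax.
Proof.
move=> k_gt0; have := nmin_ge1 k_gt0 => nmin_ge1.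
by rewrite /Delta; field; rewrite gt_eqF // (lt_le_trans ltr01).
Qed.

Lemma gap_of_Delta : (0 < k)%N -> 0 < Delta -> 2 * nmax * bmax < amin * nmin.
Proof.
move=> k_gt0 Delta_gt0; have := mulr_gt0 Delta_gt0 (lt_le_trans ltr01 (nmin_ge1 k_gt0)).
by rewrite Delta_mul_nmin // subr_gt0.
Qed.

Lemma Delta_mul_nmin_le c x : x <= 2 * nmax * bmax -> Delta * nmin <= deg c - x.
Proof.
have k_gt0 : (0 < k)%N by apply: leq_ltn_trans (ltn_ord c).
by rewrite Delta_mul_nmin //; have := deg_ge_diag c; lra.
Qed.

Let sq c := Num.sqrt ((nv c)%:R : R).
Let D := diag_mx (\row_c sq c).
Let Dinv := diag_mx (\row_c (sq c)^-1).

Lemma sq_gt0 c : 0 < sq c.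
Proof. by rewrite sqrtr_gt0 ltr0n. Qed.

Lemma sq_mul_sq c : sq c * sq c = (nv c)%:R.
Proof. by rewrite -expr2 sqr_sqrtr ?ler0n. Qed.

Lemma Dinv_mul_D : Dinv *m D = 1%:M.
Proof.
by rewrite mulmx_diag; apply/matrixP => i j; rewrite !mxE mulVf ?(gt_eqF (sq_gt0 i)).
Qed.

Lemma Dinv_mul_N_Dinv : Dinv *m N *m Dinv = 1%:M.
Proof.
rewrite !mulmx_diag; apply/matrixP => i j; rewrite !mxE -sq_mul_sq.
by have := sq_gt0 i => sq_i; congr (_ *+ _); field; rewrite gt_eqF.
Qed.

(* Conjugating by [diag (sqrt n_c)] turns [B N] into the symmetric [sqrt N B sqrt N]. *)
Lemma symmetrized_laplacian_sym : (D *m Lt *m Dinv)^T = D *m Lt *m Dinv.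
Proof.
apply/matrixP => i j; rewrite mxE !(mul_mx_diag, mul_diag_mx) !mxE.
have [->//|ij] := eqVneq i j.
rewrite !mulr0n !sub0r -{1}B_sym mxE.
rewrite -!sq_mul_sq; have := sq_gt0 i; have := sq_gt0 j => sq_j sq_i.
by field; rewrite !gt_eqF.
Qed.

Lemma block_ideal_basis sT : sorted_spectrum Lt sT ->
  exists V : 'M[R]_(k + m, k), [/\ V^T *m V = 1%:M,
    Lblk *m V = V *m diag_mx (\row_i sT`_i) & exists2 S, S \in unitmx & V = P *m S].
Proof.
move=> [_ _ sT_cp]; have [Dinv_unit _] := mulmx1_unit Dinv_mul_D.
set Ms := D *m Lt *m Dinv.
have Lt_Dinv : Lt *m Dinv = Dinv *m Ms by rewrite /Ms !mulmxA Dinv_mul_D mul1mx.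
have Ms_cp : char_poly Ms = \prod_(x <- sT) ('X - x%:P).
  by rewrite -sT_cp; apply: char_poly_similar Dinv_unit (esym Lt_Dinv).
have [U [UU MsU]] := symmetric_diagonalization symmetrized_laplacian_sym Ms_cp.
have [_ U_unit] := mulmx1_unit UU.
exists (P *m (Dinv *m U)); split.
- rewrite trmx_mul -mulmxA [P^T *m _]mulmxA partition_mx_gram_nv trmx_mul tr_diag_mx.
  by rewrite !mulmxA -(mulmxA U^T) -(mulmxA U^T) -/Dinv Dinv_mul_N_Dinv mulmx1 UU.
- by rewrite mulmxA laplacian_block_mul -!mulmxA (mulmxA Lt) Lt_Dinv -mulmxA MsU !mulmxA.
- by exists (Dinv *m U); rewrite ?unitmx_mul ?Dinv_unit.
Qed.

End BlockModel.

Lemma mulmx_col_diag (R : comPzRingType) m n (L : 'M[R]_m) (V : 'M[R]_(m, n))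
    (d : 'rV[R]_n) :
  L *m V = V *m diag_mx d -> forall j, L *m col j V = d 0 j *: col j V.
Proof.
by move=> LV j; apply/colP => i; rewrite {1}colE mulmxA LV mul_mx_diag -colE !mxE mulrC.
Qed.

Theorem proposition10 (R : realType) (k n : nat) (nv : 'I_k -> nat)
  (B : 'M[R]_k)
  (hnv : forall i, (1 <= nv i)%N)
  (hn : n = (\sum_(i < k) nv i)%N)
  (hkn : (k < n)%N)
  (hBsym : B^T = B)
  (hBnn : forall i j, 0 <= B i j) :
  let nmin := min_over (fun i => (nv i)%:R : R) in
  let nmax := max_over (fun i => (nv i)%:R : R) in
  let P := blockP R n nv in
  let Ablk := P *m B *m P^T in
  let Lblk := laplacian Ablk in
  let Delta := min_over (fun i => B i i)
               - 2 * nmax / nmin * max_over (fun i => \sum_(j < k | j != i) B i j) in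
  let Bt := B *m diag_mx (\row_i (nv i)%:R) in
  let Lt := laplacian Bt in
  let bmin := min_over (fun i => \sum_j B i j) in
  0 < Delta ->
  forall (sL sT : seq R), sorted_spectrum Lblk sL -> sorted_spectrum Lt sT ->
  [/\ (forall i : 'I_k, sL`_i = sT`_i /\
        forall v : 'cV[R]_k, eigenvector Lt sT`_i v ->
          eigenvector Lblk sL`_i (P *m v)),
      block_ideal Lblk P,
      bmin * nmin <= sL`_k &
      Delta * nmin <= sL`_k - sL`_k.-1].
Proof.
have [m def_n] : exists m, n = (k + m)%N by exists (n - k)%N; lia.
move: hn; subst n => hn; have [f [-> card_f]] := blockP_partition R hn.
move=> nmin nmax P Ablk Lblk Delta Bt Lt bmin Delta_gt0 sL sT sL_spec sT_spec.
have k_gt0 : (0 < k)%N := leq_ltn_trans (leq0n _) (ltn_ord (f (Ordinal hkn))).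
have gap := gap_of_Delta hnv k_gt0 Delta_gt0.
have [sL_low sL_high] := spectrum_block_split hnv card_f hBsym hBnn gap sL_spec sT_spec.
have [c sL_k] : exists c, sL`_k = \sum_j Bt c j by apply: sL_high; rewrite leqnn; lia.
have [size_sT _ sT_cp] := sT_spec.
split.
- by move=> i; rewrite sL_low //; split=> // v; apply: (eigenvector_block_lift (B := B)).
- have [V [VV LV [S S_unit V_PS]]] := block_ideal_basis hnv card_f hBsym sT_spec.
  exists sL; split=> //; exists V; split=> // [j|]; last by exists S.
  by rewrite (mulmx_col_diag LV) mxE sL_low.
- by rewrite sL_k; apply: (deg_ge_rowsum (B := B)).
- rewrite sL_k sL_low ?prednK //; apply: (Delta_mul_nmin_le hnv hBnn).
  apply: (eigenvalue_laplacian_le hBsym hBnn).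
  by rewrite sT_cp root_prod_XsubC mem_nth // size_sT prednK.
Qed.
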